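(* Let $$L=D_xD_y(D_x+D_y)+a_{20}D_x^2+a_{11}D_xD_y+a_{02}D_y^2+a_{10}D_x+a_{01}D_y+a_{00},$$ with all $a_{ij}\in K$, and put $s_2=a_{20}-a_{11}+a_{02}$. Then the common obstacle to factorization of $L$ of type $(X)(Y)(X+Y)$ is $$\big(a_{10}-a_{20}a_{11}+a_{20}^2-\partial_x(a_{20})+\partial_y(s_2)\big)D_x+\big(a_{01}-a_{02}a_{11}+a_{02}^2+\partial_x(a_{02}-a_{11})\big)D_y+a_{00}+a_{20}a_{02}s_2+s_2\partial_x(a_{20})+a_{20}\partial_x(s_2)+\partial_x\partial_y(s_2)+a_{02}\partial_y(s_2).$$
   Context: $K$ is a field with two commuting derivations $\partial_x,\partial_y$, and $K[D_x,D_y]$ is the ring of linear differential operators over $K$: $D_xD_y=D_yD_x$, $D_x\circ f=fD_x+\partial_x(f)$ and $D_y\circ f=fD_y+\partial_y(f)$ for $f\in K$. For an operator $M=\sum m_{ij}D_x^iD_y^j$, $\operatorname{ord}(M)$ is the largest $i+j$ with $m_{ij}\ne0$ ($\operatorname{ord}(0)=-\infty$), and the symbol is $\operatorname{Sym}_M=\sum_{i+j=\operatorname{ord}M}m_{ij}X^iY^j$. A factorization of type $(S_1)(S_2)(S_3)$ of $M$ is $M=F_1\circ F_2\circ F_3$ with $\operatorname{Sym}_{F_i}=S_i$. A common obstacle to factorization of $L$ of that type is an operator $R$ such that $L-R$ has such a factorization and $R$ has minimal possible order among such operators. *)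

From HB Require Import structures.
From mathcomp Require Import all_boot all_order all_algebra.
Set Implicit Arguments. Unset Strict Implicit. Unset Printing Implicit Defensive.
Import Order.TTheory GRing.Theory Num.Theory.
Local Open Scope ring_scope.

Definition derivation (K : fieldType) (d : K -> K) : Prop :=
  (forall a b : K, d (a + b) = d a + d b) /\
  (forall a b : K, d (a * b) = d a * b + a * d b).

(* Linear differential operators  M = sum m_ij D_x^i D_y^j  over K, stored in
   normal form (coefficients on the left) as a bivariate polynomial:
   the coefficient of D_x^i D_y^j is  (M`_i)`_j  (outer variable <-> D_x,
   inner variable <-> D_y).  The same type is used for symbols, with
   outer variable X and inner variable Y. *)
Definition op (K : fieldType) := {poly {poly K}}.

Definition mono (K : fieldType) (c : K) (i j : nat) : op K :=
  (c *: 'X^j)%:P * 'X^i.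

(* Composition in K[D_x,D_y], given by the Leibniz rule (valid since the
   derivations commute):
   (f D_x^i D_y^j) o (g D_x^i' D_y^j')
     = sum_{k<=i, l<=j} C(i,k) C(j,l) f (dx^k dy^l g) D_x^(i-k+i') D_y^(j-l+j'). *)
Definition dcomp (K : fieldType) (dx dy : K -> K) (M N : op K) : op K :=
  \sum_(i < size M) \sum_(j < size M`_i) \sum_(i' < size N)
   \sum_(j' < size N`_i') \sum_(k < i.+1) \sum_(l < j.+1)
     mono (M`_i`_j * ('C(i, k) * 'C(j, l))%:R
             * iter k dx (iter l dy (N`_i'`_j')))
          (i - k + i') (j - l + j').

Definition coef (K : fieldType) (M : op K) (i j : nat) : K := (M`_i)`_j.

(* Shifted order: ord1 M = ord(M) + 1, and ord1 0 = 0 encodes ord(0) = -oo.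
   Comparisons between orders are thus the same as comparisons of ord1. *)
Definition ord1 (K : fieldType) (M : op K) : nat :=
  (\max_(i < size M) \max_(j < size (M`_i)%R | coef M i j != 0%R) (i + j).+1)%N.

Definition Sym (K : fieldType) (M : op K) : op K :=
  \sum_(i < size M) \sum_(j < size M`_i | (i + j).+1 == ord1 M) mono (M`_i`_j) i j.

Definition has_fact_type (K : fieldType) (dx dy : K -> K) (M S1 S2 S3 : op K) : Prop :=
  exists F1 F2 F3 : op K,
    [/\ Sym F1 = S1, Sym F2 = S2, Sym F3 = S3 & M = dcomp dx dy F1 (dcomp dx dy F2 F3)].

Definition common_obstacle (K : fieldType) (dx dy : K -> K) (L S1 S2 S3 R : op K) : Prop :=
  has_fact_type dx dy (L - R) S1 S2 S3 /\
  forall R' : op K, has_fact_type dx dy (L - R') S1 S2 S3 -> (ord1 R <= ord1 R')%N.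

(* A factorization of type (X)(Y)(X+Y) is exactly a product
   (D_x + c1)(D_y + c2)(D_x + D_y + c3): a first-order operator with symbol
   pX + qY, (p, q) <> 0, is pD_x + qD_y + c.  Expanding this product, the
   second-order part of the difference with L has coefficients a20 - c2,
   a11 - (c1 + c2 + c3) and a02 - c1, so a remainder of order at most 1 forces
   c1 = a02, c2 = a20, c3 = -s2 and is then the stated operator R.  As R has
   order at most 1, no other remainder can have order <= ord R. *)

From HB Require Import structures.
From mathcomp Require Import all_boot all_order all_algebra.
From mathcomp Require Import ring zify.
Import GRing.Theory.
Local Open Scope ring_scope.
Set Implicit Arguments. Unset Strict Implicit.

Lemma sum_ord_widen (V : nmodType) n B (F : nat -> V) : (n <= B)%N ->
  (forall k, (n <= k)%N -> F k = 0) -> \sum_(i < n) F i = \sum_(i < B) F i.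
Proof.
move=> le_nB F0; rewrite (big_ord_widen _ _ le_nB) big_mkcond.
by apply: eq_bigr => i _; case: ltnP => // /F0 ->.
Qed.

Lemma sum_ord_eq1 (V : nmodType) n (F : 'I_n -> V) k (lt_kn : (k < n)%N) :
  (forall m : 'I_n, val m != k -> F m = 0) -> \sum_m F m = F (Ordinal lt_kn).
Proof.
by move=> F0; rewrite (bigD1 (Ordinal lt_kn)) //= big1 ?addr0.
Qed.

Section OperatorCoefficients.
Variable K : fieldType.
Implicit Types (M N : op K) (c : K).

Lemma opP M N : (forall i j, coef M i j = coef N i j) -> M = N.
Proof. by move=> eqMN; apply/polyP => i; apply/polyP => j; apply: eqMN. Qed.

Lemma coef_op0 i j : coef (0 : op K) i j = 0.
Proof. by rewrite /coef !coef0. Qed.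

Lemma coef_opD M N i j : coef (M + N) i j = coef M i j + coef N i j.
Proof. by rewrite /coef !coefD. Qed.

Lemma coef_opN M i j : coef (- M) i j = - coef M i j.
Proof. by rewrite /coef !coefN. Qed.

Lemma coef_opB M N i j : coef (M - N) i j = coef M i j - coef N i j.
Proof. by rewrite coef_opD coef_opN. Qed.

Lemma coef_op_sum (I : finType) (P : pred I) (F : I -> op K) i j :
  coef (\sum_(k | P k) F k) i j = \sum_(k | P k) coef (F k) i j.
Proof.
by apply: (big_morph (fun M => coef M i j)) => [M N|]; rewrite ?coef_opD ?coef_op0.
Qed.

Lemma coef_mono c i j i0 j0 :
  coef (mono c i j) i0 j0 = if (i0 == i) && (j0 == j) then c else 0.
Proof.
rewrite /coef /mono coefMXn; have [lt_i0i|le_ii0] := ltnP i0 i.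
  by rewrite coef0 ltn_eqF.
rewrite coefC subn_eq0 eqn_leq le_ii0 andbT; case: ifP => _; last by rewrite coef0.
by rewrite -mul_polyC coefCM coefXn; case: eqP; rewrite ?mulr1 ?mulr0.
Qed.

Lemma mono0 i j : mono (0 : K) i j = 0.
Proof. by apply: opP => i0 j0; rewrite coef_mono coef_op0 if_same. Qed.

Lemma monoD (a b : K) i j : mono (a + b) i j = mono a i j + mono b i j.
Proof. by apply: opP => i0 j0; rewrite coef_opD !coef_mono; case: ifP; rewrite ?addr0. Qed.

Lemma coef_neq0_size M i j :
  coef M i j != 0 -> (i < size M)%N && (j < size (M`_i)%R)%N.
Proof.
rewrite /coef; case: (ltnP i (size M)) => [_|le_Mi] /=.
  by case: (ltnP j (size (M`_i)%R)) => // le_Mij; rewrite (nth_default 0 le_Mij) eqxx.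
by rewrite (nth_default 0 le_Mi) coef0 eqxx.
Qed.

End OperatorCoefficients.

Section OrderAndSymbol.
Variable K : fieldType.
Implicit Types (M N F : op K) (p q c : K).

Lemma ord1_leP M n :
  reflect (forall i j, coef M i j != 0 -> (i + j < n)%N) (ord1 M <= n)%N.
Proof.
apply: (iffP idP) => [/bigmax_leqP le_Mn i j nz_ij | le_Mn].
  case/andP: (coef_neq0_size nz_ij) => lt_iM lt_jMi.
  by move: (le_Mn (Ordinal lt_iM) isT) => /bigmax_leqP /(_ (Ordinal lt_jMi)); apply.
by apply/bigmax_leqP => i _; apply/bigmax_leqP => j; apply: le_Mn.
Qed.

Lemma ord1_gt M i j : coef M i j != 0 -> (i + j < ord1 M)%N.
Proof. exact: (ord1_leP _ _ (leqnn _)). Qed.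

Lemma coef_ord1_eq0 M i j : (ord1 M <= i + j)%N -> coef M i j = 0.
Proof.
by move=> le_Mij; apply/eqP; apply: contraTT le_Mij => /ord1_gt; rewrite -ltnNge.
Qed.

Lemma size_op_ord1 M : (size M <= ord1 M)%N.
Proof.
apply/leq_sizeP => i le_Mi; apply/polyP => j; rewrite coef0.
by apply: coef_ord1_eq0; rewrite (leq_trans le_Mi) ?leq_addr.
Qed.

Lemma size_coef_op_ord1 M i : (size (M`_i)%R <= ord1 M)%N.
Proof.
apply/leq_sizeP => j le_Mj.
by apply: coef_ord1_eq0; rewrite (leq_trans le_Mj) ?leq_addl.
Qed.

Lemma ord1_opD M N : (ord1 (M + N)%R <= maxn (ord1 M) (ord1 N))%N.
Proof.
apply/ord1_leP => i j; rewrite coef_opD leq_max.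
have [zM|/ord1_gt -> //] := eqVneq (coef M i j) 0.
by rewrite zM add0r => /ord1_gt ->; rewrite orbT.
Qed.

Lemma ord1_mono c i j : (ord1 (mono c i j) <= (i + j).+1)%N.
Proof.
apply/ord1_leP => i0 j0; rewrite coef_mono.
by case: ifP => [/andP[/eqP-> /eqP->]|]; rewrite ?eqxx.
Qed.

Lemma coef_Sym M i j :
  coef (Sym M) i j = if (i + j).+1 == ord1 M then coef M i j else 0.
Proof.
rewrite /Sym coef_op_sum.
have [zero_ij|] := eqVneq (coef M i j) 0.
  rewrite zero_ij if_same big1 // => i' _; rewrite coef_op_sum big1 // => j' _.
  rewrite coef_mono; case: ifP => // /andP[/eqP ei /eqP ej].
  by move: zero_ij; rewrite ei ej.
move=> /coef_neq0_size /andP[lt_iM lt_jMi].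
rewrite (bigD1 (Ordinal lt_iM)) //= [X in _ + X]big1 ?addr0; last first.
  move=> i' ne_i'i; rewrite coef_op_sum big1 // => j' _.
  rewrite coef_mono; case: eqP => //= e; case/eqP: ne_i'i.
  by apply: val_inj; rewrite /= e.
rewrite coef_op_sum big_mkcond (bigD1 (Ordinal lt_jMi)) //= [X in _ + X]big1 ?addr0.
  by rewrite coef_mono !eqxx; case: ifP.
move=> j' ne_j'j; case: ifP => // _.
rewrite coef_mono eqxx /=; case: eqP => // e; case/eqP: ne_j'j.
by apply: val_inj; rewrite /= e.
Qed.

Definition first_order p q c : op K := mono p 1 0 + mono q 0 1 + mono c 0 0.

Lemma coef_first_order p q c i j :
  coef (first_order p q c) i j =
  if (i, j) == (1, 0)%N then p else if (i, j) == (0, 1)%N then q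
  else if (i, j) == (0, 0)%N then c else 0.
Proof.
by rewrite !coef_opD !coef_mono; case: i => [|[|i]]; case: j => [|[|j]];
  rewrite /= ?addr0 ?add0r.
Qed.

Lemma ord1_first_order p q c : (ord1 (first_order p q c) <= 2)%N.
Proof.
by apply/ord1_leP => i j; rewrite coef_first_order;
  case: i => [|[|i]]; case: j => [|[|j]]; rewrite //= eqxx.
Qed.

Lemma ord1_first_order_eq p q c :
  (p != 0) || (q != 0) -> ord1 (first_order p q c) = 2%N.
Proof.
move=> nz_pq; apply/eqP; rewrite eqn_leq ord1_first_order /=.
apply: contraT; rewrite -ltnNge ltnS => le_F1.
case/orP: nz_pq => /eqP[].
  by move: (coef_first_order p q c 1 0); rewrite coef_ord1_eq0.
by move: (coef_first_order p q c 0 1); rewrite coef_ord1_eq0.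
Qed.

Lemma Sym_first_order p q c :
  (p != 0) || (q != 0) -> Sym (first_order p q c) = mono p 1 0 + mono q 0 1.
Proof.
move=> nz_pq; apply: opP => i j.
rewrite coef_Sym ord1_first_order_eq // coef_first_order !coef_opD !coef_mono.
by case: i => [|[|i]]; case: j => [|[|j]]; rewrite /= ?addr0 ?add0r.
Qed.

Lemma first_order_Sym F p q :
  (p != 0) || (q != 0) -> Sym F = mono p 1 0 + mono q 0 1 ->
  F = first_order p q (coef F 0 0).
Proof.
move=> nz_pq SymF.
have coef_SymF i j : coef (Sym F) i j = coef (mono p 1 0 + mono q 0 1) i j.
  by rewrite SymF.
have := coef_SymF 1%N 0%N; have := coef_SymF 0%N 1%N.
rewrite !coef_Sym !coef_opD !coef_mono /= addr0 add0r => coefF01 coefF10.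
have ordF : ord1 F = 2%N.
  apply/eqP; rewrite eq_sym; apply: contraTT nz_pq => ne2.
  by rewrite -coefF01 -coefF10 (negbTE ne2) eqxx.
move: coefF01 coefF10; rewrite ordF eqxx => coefF01 coefF10.
apply: opP => i j; rewrite coef_first_order.
case: i => [|[|i]]; case: j => [|[|j]] //=; apply: coef_ord1_eq0; rewrite ordF; lia.
Qed.

End OrderAndSymbol.

Section Derivations.
Variables (K : fieldType) (d : K -> K).
Hypothesis hd : derivation d.

Lemma derivationD a b : d (a + b) = d a + d b.
Proof. by case: hd. Qed.

Lemma derivationM a b : d (a * b) = d a * b + a * d b.
Proof. by case: hd. Qed.

Lemma derivation0 : d 0 = 0.
Proof. by apply: (addrI (d 0)); rewrite -derivationD !addr0. Qed.

Lemma derivationN a : d (- a) = - d a.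
Proof. by apply/eqP; rewrite -addr_eq0 -derivationD addNr derivation0. Qed.

Lemma derivation1 : d 1 = 0.
Proof. by apply: (addIr (d 1)); rewrite add0r -{3}(mulr1 1) derivationM mulr1 mul1r. Qed.

Lemma iter_derivation0 k : iter k d 0 = 0.
Proof. by elim: k => //= k ->; rewrite derivation0. Qed.

Lemma iter_derivationD k a b : iter k d (a + b) = iter k d a + iter k d b.
Proof. by elim: k => //= k ->; rewrite derivationD. Qed.

End Derivations.

Section Composition.
Variables (K : fieldType) (dx dy : K -> K).
Hypotheses (hdx : derivation dx) (hdy : derivation dy).
Implicit Types (M N : op K) (c e : K).

Definition dcomp_term M N i j i' j' : op K :=
  \sum_(k < i.+1) \sum_(l < j.+1)
     mono (coef M i j * ('C(i, k) * 'C(j, l))%:R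
             * iter k dx (iter l dy (coef N i' j')))
          (i - k + i') (j - l + j').

Lemma dcomp_term_eq0l M N i j i' j' : coef M i j = 0 -> dcomp_term M N i j i' j' = 0.
Proof.
move=> zM; rewrite /dcomp_term big1 // => k _; rewrite big1 // => l _.
by rewrite zM !mul0r mono0.
Qed.

Lemma dcomp_term_eq0r M N i j i' j' : coef N i' j' = 0 -> dcomp_term M N i j i' j' = 0.
Proof.
move=> zN; rewrite /dcomp_term big1 // => k _; rewrite big1 // => l _.
by rewrite zN !iter_derivation0 // mulr0 mono0.
Qed.

Lemma dcomp_termDl M1 M2 N i j i' j' :
  dcomp_term (M1 + M2) N i j i' j' = dcomp_term M1 N i j i' j' + dcomp_term M2 N i j i' j'.
Proof.
rewrite /dcomp_term -big_split; apply: eq_bigr => k _; rewrite -big_split.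
by apply: eq_bigr => l _; rewrite coef_opD !mulrDl monoD.
Qed.

Lemma dcomp_termDr M N1 N2 i j i' j' :
  dcomp_term M (N1 + N2) i j i' j' = dcomp_term M N1 i j i' j' + dcomp_term M N2 i j i' j'.
Proof.
rewrite /dcomp_term -big_split; apply: eq_bigr => k _; rewrite -big_split.
by apply: eq_bigr => l _; rewrite coef_opD !iter_derivationD // mulrDr monoD.
Qed.

Lemma dcomp_widen M N B : (ord1 M <= B)%N -> (ord1 N <= B)%N ->
  dcomp dx dy M N =
  \sum_(i < B) \sum_(j < B) \sum_(i' < B) \sum_(j' < B) dcomp_term M N i j i' j'.
Proof.
move=> le_MB le_NB.
have sizeM := leq_trans (size_op_ord1 M) le_MB.
have sizeN := leq_trans (size_op_ord1 N) le_NB.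
have sizeMi i := leq_trans (size_coef_op_ord1 M i) le_MB.
have sizeNi i := leq_trans (size_coef_op_ord1 N i) le_NB.
pose S3 i j i' := \sum_(j' < size (N`_i')%R) dcomp_term M N i j i' j'.
pose S2 i j := \sum_(i' < size N) S3 i j i'.
pose S1 i := \sum_(j < size (M`_i)%R) S2 i j.
rewrite -[dcomp _ _ M N]/(\sum_(i < size M) S1 i).
rewrite (sum_ord_widen (F := S1) sizeM) => [|i le_Mi]; last first.
  by rewrite /S1 nth_default // size_poly0 big_ord0.
apply: eq_bigr => i _; rewrite /S1 (sum_ord_widen (F := S2 i) (sizeMi i)) => [|j le_Mij].
  apply: eq_bigr => j _; rewrite /S2 (sum_ord_widen (F := S3 i j) sizeN) => [|i' le_Ni'].
    apply: eq_bigr => i' _.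
    rewrite /S3 (sum_ord_widen (F := dcomp_term M N i j i') (sizeNi i')) //.
    by move=> j' le_Nij'; apply: dcomp_term_eq0r; rewrite /coef nth_default.
  by rewrite /S3 nth_default // size_poly0 big_ord0.
rewrite /S2 big1 // => i' _; rewrite /S3 big1 // => j' _.
by apply: dcomp_term_eq0l; rewrite /coef nth_default.
Qed.

Lemma dcompDl M1 M2 N :
  dcomp dx dy (M1 + M2) N = dcomp dx dy M1 N + dcomp dx dy M2 N.
Proof.
pose B := (ord1 M1 + ord1 M2 + ord1 N)%N.
have le1 : (ord1 M1 <= B)%N by rewrite /B; lia.
have le2 : (ord1 M2 <= B)%N by rewrite /B; lia.
have leN : (ord1 N <= B)%N by rewrite /B; lia.
have le12 : (ord1 (M1 + M2)%R <= B)%N.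
  by rewrite (leq_trans (ord1_opD _ _)) // geq_max le1.
rewrite !(dcomp_widen (B := B)) // -!big_split; apply: eq_bigr => i _.
rewrite -big_split; apply: eq_bigr => j _; rewrite -big_split; apply: eq_bigr => i' _.
by rewrite -big_split; apply: eq_bigr => j' _; rewrite dcomp_termDl.
Qed.

Lemma dcompDr M N1 N2 :
  dcomp dx dy M (N1 + N2) = dcomp dx dy M N1 + dcomp dx dy M N2.
Proof.
pose B := (ord1 N1 + ord1 N2 + ord1 M)%N.
have le1 : (ord1 N1 <= B)%N by rewrite /B; lia.
have le2 : (ord1 N2 <= B)%N by rewrite /B; lia.
have leM : (ord1 M <= B)%N by rewrite /B; lia.
have le12 : (ord1 (N1 + N2)%R <= B)%N.
  by rewrite (leq_trans (ord1_opD _ _)) // geq_max le1.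
rewrite !(dcomp_widen (B := B)) // -!big_split; apply: eq_bigr => i _.
rewrite -big_split; apply: eq_bigr => j _; rewrite -big_split; apply: eq_bigr => i' _.
by rewrite -big_split; apply: eq_bigr => j' _; rewrite dcomp_termDr.
Qed.

Lemma dcomp_mono c e i j i' j' :
  dcomp dx dy (mono c i j) (mono e i' j') =
  \sum_(k < i.+1) \sum_(l < j.+1)
     mono (c * ('C(i, k) * 'C(j, l))%:R * iter k dx (iter l dy e))
          (i - k + i') (j - l + j').
Proof.
pose B := (i + j + i' + j').+1.
have lt_iB : (i < B)%N by rewrite /B; lia.
have lt_jB : (j < B)%N by rewrite /B; lia.
have lt_i'B : (i' < B)%N by rewrite /B; lia.
have lt_j'B : (j' < B)%N by rewrite /B; lia.
rewrite (dcomp_widen (B := B)); try by rewrite (leq_trans (ord1_mono _ _ _)) // /B; lia.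
rewrite (sum_ord_eq1 lt_iB) => [|m /negbTE ne_mi]; last first.
  rewrite big1 // => ? _; rewrite big1 // => ? _; rewrite big1 // => ? _.
  by rewrite dcomp_term_eq0l // coef_mono ne_mi.
rewrite (sum_ord_eq1 lt_jB) => [|m /negbTE ne_mj]; last first.
  rewrite big1 // => ? _; rewrite big1 // => ? _.
  by rewrite dcomp_term_eq0l // coef_mono ne_mj andbF.
rewrite (sum_ord_eq1 lt_i'B) => [|m /negbTE ne_mi']; last first.
  by rewrite big1 // => ? _; rewrite dcomp_term_eq0r // coef_mono ne_mi'.
rewrite (sum_ord_eq1 lt_j'B) => [|m /negbTE ne_mj']; last first.
  by rewrite dcomp_term_eq0r // coef_mono ne_mj' andbF.
by rewrite /dcomp_term !coef_mono !eqxx.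
Qed.

Lemma dcomp_const_mono c e i j :
  dcomp dx dy (mono c 0 0) (mono e i j) = mono (c * e) i j.
Proof. by rewrite dcomp_mono !big_ord_recr !big_ord0 /= !add0r mulr1. Qed.

Lemma dcomp_Dx_mono c e i j :
  dcomp dx dy (mono c 1 0) (mono e i j) = mono (c * e) i.+1 j + mono (c * dx e) i j.
Proof. by rewrite dcomp_mono !big_ord_recr !big_ord0 /= !add0r !mulr1 addrC. Qed.

Lemma dcomp_Dy_mono c e i j :
  dcomp dx dy (mono c 0 1) (mono e i j) = mono (c * e) i j.+1 + mono (c * dy e) i j.
Proof. by rewrite dcomp_mono !big_ord_recr !big_ord0 /= !add0r !mulr1 addrC. Qed.

End Composition.

Section CommonObstacle.
Variables (K : fieldType) (dx dy : K -> K).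

Lemma common_obstacle_unique (L S1 S2 S3 R : op K) :
  has_fact_type dx dy (L - R) S1 S2 S3 ->
  (forall R', has_fact_type dx dy (L - R') S1 S2 S3 ->
     (ord1 R' <= ord1 R)%N -> R' = R) ->
  forall R', common_obstacle dx dy L S1 S2 S3 R' <-> R' = R.
Proof.
move=> factR minR R'; split=> [[factR' minR'] | ->].
  exact: minR (minR' R factR).
split=> // R'' factR''; apply: contraT; rewrite -ltnNge => lt_R''R.
by move: (lt_R''R); rewrite (minR R'' factR'' (ltnW lt_R''R)) ltnn.
Qed.

End CommonObstacle.

Section Obstacle.
Variables (K : fieldType) (dx dy : K -> K).
Hypotheses (hdx : derivation dx) (hdy : derivation dy).

Local Notation Dx := (mono (1 : K) 1 0).
Local Notation Dy := (mono (1 : K) 0 1).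

Definition fact_XYXY (c1 c2 c3 : K) : op K :=
  dcomp dx dy (first_order 1 0 c1)
    (dcomp dx dy (first_order 0 1 c2) (first_order 1 1 c3)).

Lemma fact_XYXY_expand c1 c2 c3 :
  fact_XYXY c1 c2 c3 =
  dcomp dx dy Dx (dcomp dx dy Dy (Dx + Dy))
  + mono c2 2 0 + mono (c1 + c2 + c3) 1 1 + mono c1 0 2
  + mono (dx c2 + dy c3 + c2 * c3 + c1 * c2) 1 0
  + mono (dx (c2 + c3) + c1 * (c2 + c3)) 0 1
  + mono (dx (dy c3 + c2 * c3) + c1 * (dy c3 + c2 * c3)) 0 0.
Proof.
rewrite /fact_XYXY /first_order ?mono0 ?addr0 ?add0r.
rewrite !(dcompDl, dcompDr, dcomp_Dx_mono, dcomp_Dy_mono, dcomp_const_mono) //.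
apply: opP => i j; rewrite !(coef_opD, coef_mono).
by case: i => [|[|[|[|i]]]]; case: j => [|[|[|[|j]]]];
  rewrite /= ?(derivationD hdx, derivationD hdy, derivationM hdx, derivation1 hdx,
               derivation1 hdy); ring.
Qed.

Lemma has_fact_type_XYXY M :
  has_fact_type dx dy M (mono 1 1 0) (mono 1 0 1) (mono 1 1 0 + mono 1 0 1) <->
  exists c1 c2 c3, M = fact_XYXY c1 c2 c3.
Proof.
have nzX : (1 != 0 :> K) || (0 != 0 :> K) by rewrite oner_neq0.
have nzY : (0 != 0 :> K) || (1 != 0 :> K) by rewrite oner_neq0 orbT.
have nzXY : (1 != 0 :> K) || (1 != 0 :> K) by rewrite oner_neq0.
have X_eq : mono 1 1 0 = mono 1 1 0 + mono (0 : K) 0 1 by rewrite mono0 addr0.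
have Y_eq : mono 1 0 1 = mono (0 : K) 1 0 + mono 1 0 1 by rewrite mono0 add0r.
split=> [[F1 [F2 [F3 [SymF1 SymF2 SymF3 ->]]]] | [c1 [c2 [c3 ->]]]].
  rewrite X_eq in SymF1; rewrite Y_eq in SymF2.
  exists (coef F1 0 0), (coef F2 0 0), (coef F3 0 0).
  by rewrite /fact_XYXY -(first_order_Sym nzX SymF1) -(first_order_Sym nzY SymF2)
    -(first_order_Sym nzXY SymF3).
exists (first_order 1 0 c1), (first_order 0 1 c2), (first_order 1 1 c3).
by rewrite !Sym_first_order // -X_eq -Y_eq.
Qed.

Variables a20 a11 a02 a10 a01 a00 : K.

Definition L_XYXY : op K :=
  dcomp dx dy Dx (dcomp dx dy Dy (Dx + Dy))
  + mono a20 2 0 + mono a11 1 1 + mono a02 0 2 + mono a10 1 0 + mono a01 0 1 + mono a00 0 0.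

Lemma L_sub_fact_XYXY c1 c2 c3 :
  L_XYXY - fact_XYXY c1 c2 c3 =
  mono (a20 - c2) 2 0 + mono (a11 - (c1 + c2 + c3)) 1 1 + mono (a02 - c1) 0 2
  + first_order (a10 - (dx c2 + dy c3 + c2 * c3 + c1 * c2))
                (a01 - (dx (c2 + c3) + c1 * (c2 + c3)))
                (a00 - (dx (dy c3 + c2 * c3) + c1 * (dy c3 + c2 * c3))).
Proof.
rewrite fact_XYXY_expand; apply: opP => i j.
rewrite !(coef_opB, coef_opD, coef_mono).
by case: i => [|[|[|i]]]; case: j => [|[|[|j]]]; rewrite /=; ring.
Qed.

Lemma fact_XYXY_coefs c1 c2 c3 :
  (ord1 (L_XYXY - fact_XYXY c1 c2 c3)%R <= 2)%N ->
  [/\ c1 = a02, c2 = a20 & c3 = - (a20 - a11 + a02)].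
Proof.
move=> le2; have coef_eq0 i j : (2 <= i + j)%N ->
    coef (L_XYXY - fact_XYXY c1 c2 c3) i j = 0.
  by move=> le2ij; apply: coef_ord1_eq0; apply: leq_trans le2ij.
move: (coef_eq0 2 0 isT) (coef_eq0 1 1 isT) (coef_eq0 0 2 isT).
rewrite L_sub_fact_XYXY !(coef_opD, coef_mono) /= !(addr0, add0r).
move=> /subr0_eq eq20 /subr0_eq eq11 /subr0_eq eq02; subst c1 c2.
by split=> //; rewrite eq11; ring.
Qed.

Lemma L_sub_fact_XYXY_obstacle (s2 := a20 - a11 + a02) :
  L_XYXY - fact_XYXY a02 a20 (- s2) =
  first_order (a10 - a20 * a11 + a20 ^+ 2 - dx a20 + dy s2)
              (a01 - a02 * a11 + a02 ^+ 2 + dx (a02 - a11))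
              (a00 + a20 * a02 * s2 + s2 * dx a20 + a20 * dx s2
               + dx (dy s2) + a02 * dy s2).
Proof.
rewrite L_sub_fact_XYXY (_ : a11 - (a02 + a20 + - s2) = 0) ?/s2; last by ring.
rewrite !subrr !mono0 !add0r; congr first_order;
  rewrite !(derivationD hdx, derivationD hdy, derivationN hdx, derivationN hdy,
            derivationM hdx, derivationM hdy); ring.
Qed.

End Obstacle.

Theorem mainTheorem14 (K : fieldType) (dx dy : K -> K)
  (hdx : derivation dx) (hdy : derivation dy)
  (hcomm : forall f : K, dx (dy f) = dy (dx f))
  (a20 a11 a02 a10 a01 a00 : K) :
  let Dx := mono (1 : K) 1 0 in
  let Dy := mono (1 : K) 0 1 in
  let L := dcomp dx dy Dx (dcomp dx dy Dy (Dx + Dy))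
           + mono a20 2 0 + mono a11 1 1 + mono a02 0 2
           + mono a10 1 0 + mono a01 0 1 + mono a00 0 0 in
  let s2 := a20 - a11 + a02 in
  let R := mono (a10 - a20 * a11 + a20 ^+ 2 - dx a20 + dy s2) 1 0
         + mono (a01 - a02 * a11 + a02 ^+ 2 + dx (a02 - a11)) 0 1
         + mono (a00 + a20 * a02 * s2 + s2 * dx a20 + a20 * dx s2
                 + dx (dy s2) + a02 * dy s2) 0 0 in
  forall R' : op K,
    common_obstacle dx dy L (mono 1 1 0) (mono 1 0 1) (mono 1 1 0 + mono 1 0 1) R'
    <-> R' = R.
Proof.
move=> Dx Dy L s2 R.
have obstacleR : L - fact_XYXY dx dy a02 a20 (- s2) = R :=
  L_sub_fact_XYXY_obstacle hdx hdy a20 a11 a02 a10 a01 a00.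
apply: common_obstacle_unique => [|R' /has_fact_type_XYXY [c1 [c2 [c3 factR']]] le_R'R].
  by apply/has_fact_type_XYXY; exists a02, a20, (- s2); rewrite -obstacleR subKr.
have eqR' : R' = L - fact_XYXY dx dy c1 c2 c3 by rewrite -factR' subKr.
have le2 : (ord1 (L - fact_XYXY dx dy c1 c2 c3)%R <= 2)%N.
  by rewrite -eqR' (leq_trans le_R'R) ?ord1_first_order.
rewrite eqR'; have [-> -> ->] := fact_XYXY_coefs hdx hdy le2.
exact: obstacleR.
Qed.
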